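(* Let $A$ be a Noetherian integral domain and let $B$ be an overring of $A$ that is well-centered on $A$. Then $B$ is Noetherian.
   Context: An overring of $A$ is a subring of the field of fractions of $A$ containing $A$. $B$ is well-centered on $A$ if for each $b\in B$ there is a unit $u$ of $B$ with $ub\in A$. *)

(* Rings A ⊆ B are modelled as subrings (Prop-valued subsets)
   of an ambient field K; K is the field of fractions of A. *)
From mathcomp Require Import all_boot all_algebra.
Set Implicit Arguments. Unset Strict Implicit. Unset Printing Implicit Defensive.
Import GRing.Theory.
Local Open Scope ring_scope.

Definition is_subring (K : fieldType) (S : K -> Prop) : Prop :=
  [/\ S 0, S 1, (forall x y, S x -> S y -> S (x - y))
    & (forall x y, S x -> S y -> S (x * y))].

Definition is_ideal (K : fieldType) (S I : K -> Prop) : Prop :=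
  [/\ (forall x, I x -> S x), I 0, (forall x y, I x -> I y -> I (x + y))
    & (forall r x, S r -> I x -> I (r * x))].

Definition fin_gen_ideal (K : fieldType) (S I : K -> Prop) : Prop :=
  exists g : seq K, (forall x, x \in g -> I x) /\
    (forall x, I x -> exists r : seq K, size r = size g /\
        (forall c, c \in r -> S c) /\ x = \sum_(i < size g) r`_i * g`_i).

Definition noetherian (K : fieldType) (S : K -> Prop) : Prop :=
  forall I, is_ideal S I -> fin_gen_ideal S I.

Definition is_frac_field (K : fieldType) (A : K -> Prop) : Prop :=
  forall x : K, exists a b, [/\ A a, A b, b != 0 & x = a / b].

Definition overring (K : fieldType) (A B : K -> Prop) : Prop :=
  is_subring B /\ (forall x, A x -> B x).

Definition unit_of (K : fieldType) (B : K -> Prop) (u : K) : Prop :=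
  B u /\ exists v, B v /\ u * v = 1.

Definition well_centered (K : fieldType) (A B : K -> Prop) : Prop :=
  forall b, B b -> exists u, unit_of B u /\ A (u * b).

(* Every ideal J of B is generated, as a B-ideal, by its contraction J ∩ A:
   well-centredness writes any x in J as x = v (u x) with u a unit of B,
   v = u^-1 in B and u x in J ∩ A.  Since A is Noetherian, J ∩ A is finitely
   generated over A, and the same generators then generate J over B. *)
From mathcomp Require Import all_boot all_algebra.
Set Implicit Arguments. Unset Strict Implicit.
Import GRing.Theory.
Local Open Scope ring_scope.

Section Overring.
Variable K : fieldType.

Lemma subring_add (S : K -> Prop) :
  is_subring S -> forall x y, S x -> S y -> S (x + y).
Proof.
case=> S0 _ Ssub _ x y Sx Sy.
have -> : x + y = x - (0 - y) by rewrite sub0r opprK.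
by apply: (Ssub) => //; apply: (Ssub).
Qed.

Lemma ideal_contract (A B J : K -> Prop) :
  is_subring A -> (forall x, A x -> B x) -> is_ideal B J ->
  is_ideal A (fun x => A x /\ J x).
Proof.
move=> subA AB [_ J0 Jadd Jmul]; have [A0 _ _ Amul] := subA.
split=> [x [] //| //| x y [Ax Jx] [Ay Jy] | r x Ar [Ax Jx]].
- by split; [apply: subring_add | apply: Jadd].
- by split; [apply: Amul | apply: Jmul => //; apply: AB].
Qed.

Lemma combination_mull (B : K -> Prop) (v : K) (g r : seq K) :
  is_subring B -> B v -> (forall c, c \in r -> B c) -> size r = size g ->
  exists r', [/\ size r' = size g, (forall c, c \in r' -> B c)
              & v * \sum_(i < size g) r`_i * g`_i
                = \sum_(i < size g) r'`_i * g`_i].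
Proof.
move=> [_ _ _ Bmul] Bv rB sr; exists (map (fun c => v * c) r); split.
- by rewrite size_map.
- by move=> _ /mapP [c cr ->]; apply: Bmul => //; apply: rB.
- rewrite mulr_sumr; apply: eq_bigr => i _.
  by rewrite (nth_map 0) ?sr // mulrA.
Qed.

Lemma fin_gen_ideal_from_contraction (A B J : K -> Prop) :
  overring A B -> well_centered A B -> is_ideal B J ->
  fin_gen_ideal A (fun x => A x /\ J x) -> fin_gen_ideal B J.
Proof.
move=> [subB AB] wc [JB _ _ Jmul] [g [gJ gen]].
exists g; split=> [x /gJ [] // | x Jx].
have [u [[Bu [v [Bv uv]]] Aux]] := wc x (JB x Jx).
have [r [sr [rA uxE]]] := gen _ (conj Aux (Jmul _ _ Bu Jx)).
have [r' [sr' r'B r'E]] :=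
  combination_mull subB Bv (fun c cr => AB _ (rA c cr)) sr.
exists r'; split=> //; split=> //.
by rewrite -r'E -uxE mulrA [v * u]mulrC uv mul1r.
Qed.

End Overring.

Theorem proposition3p1 (K : fieldType) (A B : K -> Prop) :
  is_subring A -> is_frac_field A -> noetherian A ->
  overring A B -> well_centered A B -> noetherian B.
Proof.
move=> subA _ noeA ovAB wc J idJ.
apply: (fin_gen_ideal_from_contraction ovAB wc idJ).
exact/noeA/(ideal_contract subA ovAB.2 idJ).
Qed.
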